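(* Let $T$ be as in the context. If a directed cycle in $T$ contains exactly $l$ restricted vertices, then it contains exactly $l$ floor vertices.
   Context: Let $A$ be a finite alphabet with a linear order $<$, extended to the lexicographic order on words. Let $\mathcal{F}$ be a set of words over $A$ (forbidden words). A word $w$ is in the language if the bi-infinite periodic sequence $\cdots www\cdots$ contains no element of $\mathcal{F}$ as a factor; $W_k$ denotes the set of words of length $k$ in the language. Fix $n\geq 1$ and consider the digraph with vertex set $A^n$ and arcs $(as,sb)$ for $a,b\in A$, $s\in A^{n-1}$, $asb\in W_{n+1}$, the label of $(as,sb)$ being $b$. The de Bruijn graph of span $n$, $G_n$, is a strongly connected component of maximum size of this digraph; vertices are identified with their words. Let $m=m_1\cdots m_n$ be the vertex of $G_n$ whose word is lexicographically largest. For each vertex $v$, let $e(v)$ be the arc of $G_n$ with tail $v$ having maximum label, and $\gamma(v)$ its label. $T$ is the spanning subgraph of $G_n$ with arc set $\{e(v): v\in V(G_n), v\neq m\}$ (so $m$ lies on no cycle of $T$). For a vertex $u\neq m$, $g(u)$ is the longest word which is both a prefix of $m$ and a suffix of $u$ (possibly empty), and $\alpha(u)=m_{|g(u)|+1}$. A vertex $u\ne m$ is a floor vertex if $g(u)$ is the empty word, and a restricted vertex if $\gamma(u)<\alpha(u)$. *)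

From mathcomp Require Import all_boot.
From mathcomp Require Import boolp.
From Stdlib Require Import Relation_Operators.
Set Implicit Arguments. Unset Strict Implicit. Unset Printing Implicit Defensive.

(* Alphabet: 'I_q with its natural linear order (any finite linearly ordered
   alphabet is order-isomorphic to some 'I_q).  Words: seq 'I_q. *)
Section DeBruijn.
Variable q : nat.
Notation word := (seq 'I_q).

(* u is a factor of the bi-infinite periodic sequence ...www... *)
Definition periodic_factor (w u : word) : Prop :=
  exists i : nat, forall j, j < size u -> onth u j = onth w ((i + j) %% size w).

Definition in_lang (F : word -> Prop) (w : word) : Prop :=
  0 < size w /\ forall u, F u -> ~ periodic_factor w u.

Variable n : nat.
Notation vtx := (n.-tuple 'I_q).

(* arc (as, sb) with label b, i.e. w = s b where v = a s, and a s b in W_{n+1} *)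
Definition arc_lab (F : word -> Prop) (v : vtx) (b : 'I_q) (w : vtx) : Prop :=
  val w = rcons (behead (val v)) b /\ in_lang F (rcons (val v) b).

Definition arc (F : word -> Prop) (v w : vtx) : Prop := exists b, arc_lab F v b w.

Definition reach (F : word -> Prop) : vtx -> vtx -> Prop := clos_refl_trans vtx (arc F).

Definition is_SCC (F : word -> Prop) (S : {set vtx}) : Prop :=
  (exists v, v \in S) /\
  (forall u v, u \in S -> v \in S -> reach F u v) /\
  (forall u v, u \in S -> reach F u v -> reach F v u -> v \in S).

Definition is_max_SCC (F : word -> Prop) (S : {set vtx}) : Prop :=
  is_SCC F S /\ forall S', is_SCC F S' -> #|S'| <= #|S|.

Fixpoint lexle (s t : word) : bool :=
  match s, t with
  | [::], _ => true
  | _ :: _, [::] => false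
  | x :: s', y :: t' => (x < y) || ((x == y) && lexle s' t')
  end.

Definition is_lex_max (S : {set vtx}) (m : vtx) : Prop :=
  m \in S /\ forall v, v \in S -> lexle (val v) (val m).

Definition max_label (F : word -> Prop) (S : {set vtx}) (u : vtx) (b : 'I_q) : Prop :=
  u \in S /\ (exists w, w \in S /\ arc_lab F u b w) /\
  forall b' w', w' \in S -> arc_lab F u b' w' -> b' <= b.

Definition T_arc (F : word -> Prop) (S : {set vtx}) (m u w : vtx) : Prop :=
  u != m /\ w \in S /\ exists b, max_label F S u b /\ arc_lab F u b w.

Definition T_cycle (F : word -> Prop) (S : {set vtx}) (m : vtx) (c : seq vtx) : Prop :=
  match c with
  | [::] => False
  | x0 :: _ => uniq c /\ forall i, i < size c ->
      T_arc F S m (nth x0 c i) (nth x0 c (i.+1 %% size c))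
  end.

Definition glen (m u : vtx) : nat :=
  \max_(k < n.+1 | take k (val m) == drop (n - k) (val u)) k.

(* alpha(u) = m_{|g(u)|+1} (1-indexed), i.e. nth (0-indexed) |g(u)|;
   the default is irrelevant since |g(u)| < n for u <> m. *)
Definition alpha (m u : vtx) (dflt : 'I_q) : 'I_q := nth dflt (val m) (glen m u).

Definition floor_vtx (m u : vtx) : bool := (u != m) && (glen m u == 0).

Definition restricted (F : word -> Prop) (S : {set vtx}) (m u : vtx) : Prop :=
  u != m /\ exists b, max_label F S u b /\ b < alpha m u b.

Definition restrictedb F S m u : bool := `[< restricted F S m u >].

End DeBruijn.

From Pilot Require Import Defs.
From mathcomp Require Import all_boot.
From mathcomp Require Import boolp.
From Stdlib Require Import Relation_Operators.
From mathcomp Require Import zify.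
Set Implicit Arguments. Unset Strict Implicit.

(* Let u -> w be an arc of T with label b = gamma(u), and g = |g(u)|; the last
   g+1 letters of w are m_1 ... m_g b.  In a strongly connected component with
   two vertices every vertex has a successor, so every suffix of a vertex of
   G_n begins some vertex of G_n; maximality of m then forces b <= alpha(u).
   If b = alpha(u), then g(w) = g(u) b is nonempty.  If b < alpha(u), a nonempty
   g(w) = g' b would make g' a proper border of g(u), and the vertex beginning
   with the corresponding shift of m would exceed m.  So w is a floor vertex
   exactly when u is restricted, and since a cycle of T avoids m, the two
   counts along the cycle agree. *)

Lemma lexle_rcons_gt q (P s t : seq 'I_q) (a b : 'I_q) : b < a ->
  lexle (rcons P a ++ s) (rcons P b ++ t) = false.
Proof.
move=> lt_ba; rewrite !cat_rcons; elim: P => [|x P IHP] /=; last by rewrite ltnn eqxx.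
by rewrite ltnNge (ltnW lt_ba) -(inj_eq val_inj) /= gtn_eqF.
Qed.

Lemma lexle_take_gt q (s t P : seq 'I_q) j (a b : 'I_q) : b < a ->
  take j.+1 s = rcons P a -> take j.+1 t = rcons P b -> lexle s t = false.
Proof.
move=> lt_ba s_pre t_pre.
by rewrite -(cat_take_drop j.+1 s) -(cat_take_drop j.+1 t) s_pre t_pre lexle_rcons_gt.
Qed.

Lemma count_cycle_succ (T : Type) (p p' : pred T) (x0 : T) (s : seq T) :
  (forall i, i < size s -> p (nth x0 s i) = p' (nth x0 s (i.+1 %% size s))) ->
  count p s = count p' s.
Proof.
case: s => [// | x s] succ_eq.
have -> : count p' (x :: s) = count p' (rcons s x).
  by rewrite -cats1 count_cat /= addn0 addnC.
rewrite -[LHS](count_map p idfun) -[RHS](count_map p' idfun); congr count.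
apply: (eq_from_nth (x0 := false)); rewrite ?size_map ?size_rcons // => i lt_is.
rewrite (nth_map x0) // (nth_map x0) ?size_rcons // succ_eq // nth_rcons.
case: (ltngtP i (size s)) => [lt_i | gt_i | ->]; last by rewrite modnn.
- by rewrite modn_small.
- by rewrite ltnS leqNgt gt_i in lt_is.
Qed.

Section Border.
Variables q n : nat.
Implicit Types m u : n.-tuple 'I_q.

Lemma glen_border m u :
  glen m u <= n /\ take (glen m u) (val m) = drop (n - glen m u) (val u).
Proof.
rewrite /glen.
have : 0 < #|[pred k : 'I_n.+1 | take k (val m) == drop (n - k) (val u)]|.
  by apply/card_gt0P; exists ord0; rewrite inE /= take0 subn0 drop_oversize ?size_tuple.
case/(eq_bigmax_cond (fun k : 'I_n.+1 => val k)) => k; rewrite inE => /eqP border ->.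
by rewrite -ltnS ltn_ord.
Qed.

Lemma glen_max m u k : k <= n ->
  take k (val m) = drop (n - k) (val u) -> k <= glen m u.
Proof.
move=> le_kn border; rewrite /glen.
by apply: (leq_bigmax_cond (Ordinal (le_kn : k < n.+1))); rewrite /= border.
Qed.

Lemma glen_lt m u : u != m -> glen m u < n.
Proof.
move=> neq_um; have [le_gn border] := glen_border m u.
rewrite ltn_neqAle le_gn andbT; apply: contra neq_um => /eqP g_n.
move: border; rewrite g_n subnn drop0 -{1}(size_tuple m) take_size => m_u.
by rewrite (val_inj m_u).
Qed.

End Border.

Section Walks.
Variables (q n : nat) (F : seq 'I_q -> Prop) (S : {set n.-tuple 'I_q}).
Implicit Types x y u w : n.-tuple 'I_q.

Lemma reach_split_first x y : reach F x y ->
  x = y \/ exists z, Defs.arc F x z /\ reach F z y.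
Proof.
elim=> [x' y' xy | x' | x' y' z' _ IHxy yz IHyz].
- by right; exists y'; split=> //; apply: rt_refl.
- by left.
case: IHxy => [-> // | [z [xz zy]]].
by right; exists z; split=> //; apply: rt_trans zy yz.
Qed.

Hypotheses (S_scc : is_SCC F S) (S_gt1 : 1 < #|S|).

Lemma scc_successor x : x \in S -> exists y, y \in S /\ Defs.arc F x y.
Proof.
move: S_scc => [_ [S_reach S_closed]] Sx.
have [u [Su neq_xu]] : exists u, u \in S /\ x != u.
  case/card_gt1P: S_gt1 => a [a' [Sa Sa' neq_aa']].
  by case: (eqVneq x a) => [-> | ?]; [exists a' | exists a].
case: (reach_split_first (S_reach _ _ Sx Su)) => [x_u | [y [xy yu]]].
  by rewrite x_u eqxx in neq_xu.
exists y; split=> //; apply: (S_closed x) => //; first exact: rt_step.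
exact: rt_trans yu (S_reach _ _ Su Sx).
Qed.

Lemma scc_shift_walk k x : k <= n -> x \in S ->
  exists y, y \in S /\ take (n - k) (val y) = drop k (val x).
Proof.
elim: k => [|k IHk] le_kn Sx.
  by exists x; split=> //; rewrite subn0 drop0 -{1}(size_tuple x) take_size.
have [y [Sy y_pre]] := IHk (ltnW le_kn) Sx.
have [z [Sz [b [z_def _]]]] := scc_successor Sy.
exists z; split=> //.
rewrite z_def -cats1 takel_cat ?size_behead ?size_tuple; last by lia.
rewrite -drop1 take_drop (_ : n - k.+1 + 1 = n - k); last by lia.
by rewrite y_pre drop_drop add1n.
Qed.

Variables (m : n.-tuple 'I_q) (m_max : is_lex_max S m).

Lemma lex_max_shift_prefix k x j (P : seq 'I_q) (a b : 'I_q) :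
  x \in S -> j < n - k ->
  take j.+1 (drop k (val x)) = rcons P a -> take j.+1 (val m) = rcons P b ->
  a <= b.
Proof.
move=> Sx lt_j x_pre m_pre; rewrite leqNgt; apply/negP => lt_ba.
have le_kn : k <= n by lia.
have [y [Sy y_pre]] := scc_shift_walk le_kn Sx.
have y_pre' : take j.+1 (val y) = rcons P a.
  by rewrite -(@take_takel _ _ (n - k)) // y_pre.
by have := m_max.2 y Sy; rewrite (lexle_take_gt lt_ba y_pre' m_pre).
Qed.

Lemma arc_lab_drop u b w k : arc_lab F u b w -> k < n ->
  drop (n - k.+1) (val w) = rcons (drop (n - k) (val u)) b.
Proof.
move=> [w_def _] lt_kn; rewrite w_def drop_rcons ?size_behead ?size_tuple; last by lia.
by rewrite -drop1 drop_drop (_ : n - k.+1 + 1 = n - k) //; lia.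
Qed.

Lemma max_label_unique u b1 b2 : max_label F S u b1 -> max_label F S u b2 -> b1 = b2.
Proof.
move=> [_ [[w1 [Sw1 arc1]] max1]] [_ [[w2 [Sw2 arc2]] max2]].
by apply/val_inj/eqP; rewrite eqn_leq (max2 _ _ Sw1 arc1) (max1 _ _ Sw2 arc2).
Qed.

Lemma restrictedbE u b : u != m -> max_label F S u b ->
  restrictedb F S m u = (b < alpha m u b).
Proof.
move=> neq_um ub; rewrite /restrictedb -[RHS]asboolb; apply: asbool_equiv_eq.
split=> [[_ [b' [ub' lt_b']]] | lt_b]; last by split=> //; exists b.
by rewrite -(max_label_unique ub' ub).
Qed.

Section TArc.
Variables (u w : n.-tuple 'I_q) (b : 'I_q).
Hypotheses (neq_um : u != m) (uw : arc_lab F u b w).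

Let g := glen m u.
Let lt_gn : g < n := glen_lt neq_um.
Let u_border : take g (val m) = drop (n - g) (val u) := (glen_border m u).2.
Let m_pre : take g.+1 (val m) = rcons (take g (val m)) (alpha m u b).
Proof. by rewrite (take_nth b) ?size_tuple. Qed.
Let w_suffix : drop (n - g.+1) (val w) = rcons (take g (val m)) b.
Proof. by rewrite (arc_lab_drop uw lt_gn) u_border. Qed.

Lemma label_le_alpha : w \in S -> b <= alpha m u b.
Proof.
move=> Sw; apply: (lex_max_shift_prefix (k := n - g.+1) (j := g) Sw _ _ m_pre); first by lia.
by rewrite w_suffix take_oversize // size_rcons size_take size_tuple lt_gn.
Qed.

Lemma glen_gt0_of_eq_alpha : b = alpha m u b -> 0 < glen m w.
Proof.
move=> b_alpha; apply: leq_trans (glen_max lt_gn _) => //.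
by rewrite m_pre w_suffix -b_alpha.
Qed.

Lemma glen_eq0_of_lt_alpha : b < alpha m u b -> glen m w = 0.
Proof.
move=> lt_b_alpha; case w_glen: (glen m w) => [// | j].
have [lt_jn w_border] := glen_border m w; rewrite w_glen in lt_jn w_border.
rewrite (arc_lab_drop uw lt_jn) (take_nth b) ?size_tuple // in w_border.
case/rcons_inj: w_border => m_border mj_b.
have lt_jg : j < g.
  rewrite ltn_neqAle (glen_max (ltnW lt_jn) m_border) andbT.
  by apply: contraTneq lt_b_alpha => j_g; rewrite /alpha -/g -j_g mj_b ltnn.
suff : alpha m u b <= b by rewrite leqNgt lt_b_alpha.
apply: (lex_max_shift_prefix (k := g - j) (j := j) (P := take j (val m)) m_max.1).
- by lia.
- rewrite (take_nth b) ?size_drop ?size_tuple; last by lia.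
  rewrite nth_drop subnK ?(ltnW lt_jg) // take_drop addnC subnK ?(ltnW lt_jg) //.
  by rewrite u_border drop_drop (_ : g - j + (n - g) = n - j) -?m_border //; lia.
- by rewrite (take_nth b) ?size_tuple ?mj_b.
Qed.
End TArc.

Lemma T_arc_restrictedb_floor u w : T_arc F S m u w -> w != m ->
  restrictedb F S m u = floor_vtx m w.
Proof.
move=> [neq_um [Sw [b [ub uw]]]] neq_wm.
rewrite (restrictedbE neq_um ub) /floor_vtx neq_wm /=.
have := label_le_alpha neq_um uw Sw.
rewrite leq_eqVlt => /orP [/eqP/val_inj b_alpha | lt_b_alpha].
- rewrite -{1}b_alpha ltnn; apply/esym/negbTE; rewrite -lt0n.
  exact: glen_gt0_of_eq_alpha neq_um uw b_alpha.
- by rewrite lt_b_alpha (glen_eq0_of_lt_alpha neq_um uw lt_b_alpha).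
Qed.

End Walks.

Theorem corollary2 (q n : nat) (F : seq 'I_q -> Prop)
    (S : {set n.-tuple 'I_q}) (m : n.-tuple 'I_q)
    (n_pos : 0 < n)
    (HS : is_max_SCC F S) (Hm : is_lex_max S m)
    (c : seq (n.-tuple 'I_q)) (l : nat) :
  T_cycle F S m c ->
  count (restrictedb F S m) c = l ->
  count (floor_vtx m) c = l.
Proof.
case: c => [// | x0 c] [_ cycle_arc] <-; apply/esym.
have [neq_x0m [_ [b [[Sx0 _] _]]]] := cycle_arc 0 isT.
have S_gt1 : 1 < #|S| by apply/card_gt1P; exists x0, m; rewrite Sx0 Hm.1.
apply: (count_cycle_succ (x0 := x0)) => i lt_i.
apply: (T_arc_restrictedb_floor HS.1 S_gt1 Hm (cycle_arc i lt_i)).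
by case: (cycle_arc _ (ltn_pmod i.+1 (ltn0Sn (size c)))).
Qed.
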